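(* For every integer $n>1$, more than half of the matrices in $(\mathbb F_2)^{n\times n}$ have a $1$-dimensional null space.
   Context: $(\mathbb F_2)^{n\times n}$ is the set of all $n\times n$ matrices over $\mathbb F_2$. *)

From mathcomp Require Import all_boot all_algebra.
Set Implicit Arguments. Unset Strict Implicit. Unset Printing Implicit Defensive.
Local Open Scope ring_scope.

(* The null space of A : 'M_n is {x : 'cV_n | A *m x = 0}.  Transposing,
   it is {x^T | x^T *m A^T = 0}, i.e. the row space of kermx A^T.
   Its dimension is the rank of kermx A^T. *)
Definition nullity (F : fieldType) (n : nat) (A : 'M[F]_n) : nat :=
  \rank (kermx A^T).

(* Adding a row v to a k x n matrix of rank r over F_q keeps the rank for the
   q^r vectors v of its row space and raises it for the q^n - q^r others; this
   recursion counts the (k+1) x n matrices of rank k as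
   \prod_(i < k) (q^n - q^i) * (1 + q + ... + q^k).
   For q = 2 and k + 1 = n this is 2^(n^2) (1 - 2^-n) \prod_(2 <= j <= n) (1 - 2^-j),
   and the Weierstrass inequality \prod (1 - x_j) >= 1 - \sum x_j bounds it
   below by 2^(n^2) (1/2 + 2^-n) (1 - 2^-n), which exceeds 2^(n^2) / 2 for n > 1. *)
From mathcomp Require Import all_boot all_algebra.
From mathcomp Require Import zify ring.
Set Implicit Arguments. Unset Strict Implicit. Unset Printing Implicit Defensive.

Section RankCount.
Variables (F : finFieldType) (n : nat).
Local Notation q := #|F|.
Local Notation nrank k r := #|[set A : 'M[F]_(k, n) | \rank A == r]|.

Lemma card_rV_submx k (A : 'M[F]_(k, n)) :
  #|[set v : 'rV[F]_n | (v <= A)%MS]| = q ^ \rank A.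
Proof.
have [C baseC] := row_freeP (row_base_free A).
transitivity #|[set (w *m row_base A)%R | w in 'rV[F]_(\rank A)]|.
  apply: eq_card => v; rewrite !inE -(eq_row_base A).
  by apply/submxP/imsetP => [[w ->]|[w _ ->]]; exists w.
rewrite card_imset ?card_mx ?mul1n //.
by apply: (can_inj (g := mulmx^~ C)) => w; rewrite -mulmxA baseC mulmx1.
Qed.

Lemma card_rV_notsubmx k (A : 'M[F]_(k, n)) :
  #|[set v : 'rV[F]_n | ~~ (v <= A)%MS]| = q ^ n - q ^ \rank A.
Proof.
have := cardsC [set v : 'rV[F]_n | (v <= A)%MS].
rewrite card_rV_submx card_mx mul1n => <-; rewrite addKn.
by apply: eq_card => v; rewrite !inE.
Qed.

Lemma mxrank_col_mx_rV k (v : 'rV[F]_n) (A : 'M[F]_(k, n)) :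
  \rank (col_mx v A) = \rank A + ~~ (v <= A)%MS.
Proof.
rewrite -addsmxE; have [vA | nvA] := boolP (v <= A)%MS.
  by rewrite addn0; apply/eqmx_rank/eqmxP/addsmx_idPr.
have ltA : (A < v + A)%MS by rewrite ltmxE addsmxSr addsmx_sub submx_refl andbT.
have lt_rank := rank_ltmx ltA; have [le_rank _] := mxrank_adds_leqif v A.
by have := rank_leq_row v; lia.
Qed.

Lemma card_rank_col_mx_rV k (A : 'M[F]_(k, n)) r :
  #|[set v : 'rV[F]_n | \rank (col_mx v A) == r.+1]| =
  (if \rank A == r.+1 then q ^ r.+1 else 0) +
  (if \rank A == r then q ^ n - q ^ r else 0).
Proof.
have [rA_Sr | rA_nSr] := eqVneq (\rank A) r.+1.
  rewrite rA_Sr (gtn_eqF (ltnSn r)) addn0 -rA_Sr -card_rV_submx.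
  apply: eq_card => v; rewrite !inE mxrank_col_mx_rV.
  by rewrite -[X in _ == X]addn0 eqn_add2l; case: (v <= A)%MS.
have [rA_r | rA_nr] := eqVneq (\rank A) r.
  rewrite -rA_r -card_rV_notsubmx.
  apply: eq_card => v; rewrite !inE mxrank_col_mx_rV.
  by rewrite -[(\rank A).+1]addn1 eqn_add2l; case: (v <= A)%MS.
apply/eqP; rewrite cards_eq0; apply/eqP/setP => v; rewrite !inE.
by rewrite mxrank_col_mx_rV; case: (v <= A)%MS => /=; lia.
Qed.

Lemma card_mxrank_rec k r :
  nrank k.+1 r.+1 = nrank k r.+1 * q ^ r.+1 + nrank k r * (q ^ n - q ^ r).
Proof.
rewrite -!sum_nat_cond_const [in RHS]big_mkcond [X in _ + X]big_mkcond.
rewrite -big_split -sum1dep_card big_mkcond /=.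
rewrite (reindex (fun vA : 'rV[F]_n * 'M[F]_(k, n) => col_mx vA.1 vA.2)) /=;
  last first.
  exists (fun B : 'M[F]_(1 + k, n) => (usubmx B, dsubmx B)) => [[v A] _ | B _].
    by rewrite col_mxKu col_mxKd.
  by rewrite vsubmxK.
rewrite -(pair_bigA _ (fun v A => if \rank (col_mx v A) == r.+1 then 1 else 0)).
rewrite exchange_big; apply: eq_bigr => A _ /=.
by rewrite -big_mkcond sum1dep_card card_rank_col_mx_rV.
Qed.

Lemma card_mxrank0 k : nrank k 0 = 1.
Proof.
rewrite -(cards1 (0 : 'M[F]_(k, n))%R); apply: eq_card => A.
by rewrite !inE mxrank_eq0.
Qed.

Lemma card_mxrank_gt k r : k < r -> nrank k r = 0.
Proof.
move=> lt_k_r; apply/eqP; rewrite cards_eq0; apply/eqP/setP => A; rewrite !inE.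
by have := rank_leq_row A; lia.
Qed.

Lemma card_mxrank_full k : nrank k k = \prod_(i < k) (q ^ n - q ^ i).
Proof.
elim: k => [|k IHk]; first by rewrite card_mxrank0 big_ord0.
by rewrite card_mxrank_rec card_mxrank_gt // IHk big_ord_recr.
Qed.

Lemma card_mxrank_corank1 k :
  nrank k.+1 k = \prod_(i < k) (q ^ n - q ^ i) * \sum_(i < k.+1) q ^ i.
Proof.
elim: k => [|k IHk]; first by rewrite card_mxrank0 big_ord0 big_ord1.
rewrite card_mxrank_rec card_mxrank_full IHk !big_ord_recr /=.
by move: (\prod_(i < k) _) (\sum_(i < k) _) (q ^ n - q ^ k) => P S D; ring.
Qed.

End RankCount.

Lemma weierstrass_prod_subn (N k : nat) (a : nat -> nat) :
  N ^ k * (N - \sum_(i < k) a i) <= N * \prod_(i < k) (N - a i).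
Proof.
have two_factors S b : N * (N - (S + b)) <= (N - S) * (N - b).
  have [/subnKC <-|/ltnW] := leqP (S + b) N; first by move: (N - _) => x; nia.
  by rewrite -subn_eq0 => /eqP ->; rewrite muln0.
elim: k => [|k IHk]; first by rewrite !big_ord0 subn0 mul1n muln1.
rewrite !big_ord_recr /= expnS -mulnA mulnCA.
apply: (@leq_trans (N ^ k * ((N - \sum_(i < k) a i) * (N - a k)))).
  by rewrite leq_mul2l two_factors orbT.
by rewrite mulnA (mulnA N) leq_mul.
Qed.

Lemma corank1_count_F2_gt_half m :
  2 ^ (m.+2 * m.+2) <
  2 * (\prod_(i < m.+1) (2 ^ m.+2 - 2 ^ i) * \sum_(i < m.+2) 2 ^ i).
Proof.
have geom k : \sum_(i < k) 2 ^ i = (2 ^ k).-1 by rewrite predn_exp mul1n.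
have X_gt0 : 0 < (2 ^ m.+2) ^ m.+1 by rewrite !expn_gt0.
have t_gt0 : 0 < 2 ^ m by rewrite expn_gt0.
have := weierstrass_prod_subn (2 ^ m.+2) m.+1 (fun i => 2 ^ i).
rewrite !geom expnM (expnS (2 ^ m.+2) m.+1).
move: X_gt0 t_gt0.
move: (\prod_(i < m.+1) (2 ^ m.+2 - 2 ^ i)) ((2 ^ m.+2) ^ m.+1) => P X.
by rewrite !expnS; move: (2 ^ m) => t; nia.
Qed.

Lemma nullity_eq1 (F : fieldType) m (A : 'M[F]_m.+1) :
  (nullity A == 1) = (\rank A == m).
Proof. by rewrite /nullity mxrank_ker mxrank_tr; have := rank_leq_row A; lia. Qed.

Theorem mainTheorem13 (n : nat) (hn : (1 < n)%N) :
  (#|{: 'M['F_2]_n}| < 2 * #|[set A : 'M['F_2]_n | nullity A == 1%N]|)%N.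
Proof.
case: n hn => [|[|m]] // _.
have -> : #|[set A : 'M['F_2]_m.+2 | nullity A == 1]| =
          #|[set A : 'M['F_2]_m.+2 | \rank A == m.+1]|.
  by apply: eq_card => A; rewrite !inE nullity_eq1.
rewrite card_mxrank_corank1 card_mx card_Fp //.
exact: corank1_count_F2_gt_half.
Qed.
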